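(* Let $G$ be a finite graph with $n$ vertices and $t$ a positive integer with prime factorization $t=\prod_{i=1}^s p_i^{r_i}$. Write $Z_t\times Z_2=\{(\rho^i,\sigma^j): 0\le i\le t-1,\ j\in\{0,1\}\}$ (with $\rho$ of order $t$, $\sigma$ of order 2) and $D_t\times Z_2=\{(\rho^i,\sigma^j),(\tau\rho^i,\sigma^j): 0\le i\le t-1,\ j\in\{0,1\}\}$ (with $\rho,\tau$ the rotation and reflection generating $D_t$), and when $\mathrm{Aut}(G)$ is isomorphic to one of these groups denote by $\pi_g$ the automorphism corresponding to the group element $g$. Let $P_0^*=\{\pi_{(\rho^0,\sigma)}\}$ if $t$ is odd and $P_0^*=\{\pi_{(\rho^0,\sigma)},\pi_{(\rho^{t/2},\sigma)}\}$ if $t$ is even, and let $P^*=P_0^*\cup\{\pi_{(\rho^{t/p_i},\sigma^0)}: i=1,\dots,s\}$. Then for every positive integer $k$: (i) if $\mathrm{Aut}(G)\cong Z_t\times Z_2$, then $L(G,k)=\sum_{P\subseteq P^*}(-1)^{|P|}N_{\ge}(P)$; (ii) if $\mathrm{Aut}(G)\cong D_t\times Z_2$, then for $b\in\{0,1\}$ and $0\le i\le t-1$, $$N_=(\{\pi_{(\rho^0,\sigma^0)},\pi_{(\tau\rho^i,\sigma^b)}\})=\sum_{\{\pi_{(\tau\rho^i,\sigma^b)}\}\subseteq P\subseteq\{\pi_{(\tau\rho^i,\sigma^b)}\}\cup P^*}(-1)^{|P|-1}N_{\ge}(P),$$ and $$L(G,k)=\sum_{P\subseteq P^*}(-1)^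{|P|}N_{\ge}(P)-\sum_{b=0}^{1}\sum_{i=0}^{t-1}N_=(\{\pi_{(\rho^0,\sigma^0)},\pi_{(\tau\rho^i,\sigma^b)}\}).$$
   Context: A $k$-labeling of $G$ is a map $\phi:V(G)\to\{1,\dots,k\}$; an automorphism $\pi$ preserves $\phi$ if $\phi(\pi(v))=\phi(v)$ for all $v$; $\phi$ is distinguishing if only the identity preserves it; $L(G,k)$ is the number of distinguishing $k$-labelings. For $P\subseteq\mathrm{Aut}(G)$, $N_{\ge}(P)$ is the number of $k$-labelings preserved by every automorphism in $P$ (so $N_{\ge}(\emptyset)=k^n$), and $N_=(P)$ is the number of $k$-labelings whose set of preserving automorphisms is exactly $P$. *)

From mathcomp Require Import all_boot all_order all_algebra all_fingroup.
Set Implicit Arguments. Unset Strict Implicit. Unset Printing Implicit Defensive.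
Import GRing.Theory.

Section Defs.
Variable V : finType.

Definition Aut (e : rel V) : {set {perm V}} :=
  [set p : {perm V} | [forall x, forall y, e (p x) (p y) == e x y]].

(* k-labelings are maps V -> 'I_k (labels 1..k shifted to 0..k-1). *)
Definition preserves (k : nat) (p : {perm V}) (phi : {ffun V -> 'I_k}) : bool :=
  [forall v, phi (p v) == phi v].

Definition stab (e : rel V) (k : nat) (phi : {ffun V -> 'I_k}) : {set {perm V}} :=
  [set p in Aut e | preserves p phi].

Definition distinguishing (e : rel V) (k : nat) (phi : {ffun V -> 'I_k}) : bool :=
  stab e phi == [set 1%g].

Definition Ldist (e : rel V) (k : nat) : nat :=
  #|[set phi : {ffun V -> 'I_k} | distinguishing e phi]|.

Definition Nge (k : nat) (P : {set {perm V}}) : nat :=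
  #|[set phi : {ffun V -> 'I_k} | [forall p in P, preserves p phi]]|.

Definition Neq (e : rel V) (k : nat) (P : {set {perm V}}) : nat :=
  #|[set phi : {ffun V -> 'I_k} | stab e phi == P]|.

(* Aut(G) ~ Z_t x Z_2 via rho |-> r, sigma |-> s: the defining relations hold
   and (i,j) |-> r^i s^j is a bijection from Z_t x Z_2 onto Aut(G). *)
Definition ZtZ2_iso (e : rel V) (t : nat) (r s : {perm V}) : Prop :=
  [/\ (r ^+ t = 1)%g, (s ^+ 2 = 1)%g, commute r s,
      Aut e = [set (r ^+ i * s ^+ j)%g | i : 'I_t, j : 'I_2]
    & #|Aut e| = (t * 2)%N].

(* Aut(G) ~ D_t x Z_2 via rho |-> r, tau |-> u, sigma |-> s. *)
Definition DtZ2_iso (e : rel V) (t : nat) (r u s : {perm V}) : Prop :=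
  [/\ (r ^+ t = 1)%g, (u ^+ 2 = 1)%g, (s ^+ 2 = 1)%g, (u * r * u = r^-1)%g
    & commute r s] /\ commute u s /\
      Aut e = [set (u ^+ c.1 * (r ^+ c.2.1 * s ^+ c.2.2))%g | c : 'I_2 * ('I_t * 'I_2)] /\
  #|Aut e| = (2 * t * 2)%N.

Definition P0star (t : nat) (r s : {perm V}) : {set {perm V}} :=
  if odd t then [set s] else [set s; (r ^+ (t %/ 2) * s)%g].

Definition Pstar (t : nat) (r s : {perm V}) : {set {perm V}} :=
  P0star t r s :|: [set:: [seq (r ^+ (t %/ p))%g | p <- primes t]].

End Defs.

(* Since N_>=(P) counts the labelings fixed by all of P, inclusion-exclusion
   over the subsets of P* turns sum_(P in P* ) (-1)^|P| N_>=(P) into the number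
   of labelings whose stabilizer in Aut(G) avoids P*.  Every nontrivial
   subgroup of <rho> x <sigma> meets P*: a nontrivial subgroup of <rho>
   contains the unique subgroup of order p, generated by rho^(t/p), for some
   prime p | t; otherwise the group contains some rho^i sigma whose square
   rho^(2i) must be 1, so that it is sigma or rho^(t/2) sigma.  Hence for
   Z_t x Z_2 the stabilizer avoids P* iff it is trivial.  For D_t x Z_2 such a
   stabilizer meets <rho, sigma> trivially, and the product of two elements
   tau rho^i sigma^b lies in <rho, sigma>, so the stabilizer is either trivial
   or of the form {1, tau rho^i sigma^b}; this gives both formulas of (ii). *)

From Pilot Require Import Defs.
From mathcomp Require Import all_boot all_order all_algebra all_fingroup all_solvable.
Import GRing.Theory Num.Theory.
Set Implicit Arguments. Unset Strict Implicit. Unset Printing Implicit Defensive.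

Section SignedSubsetSums.
Variable T : finType.
Local Open Scope ring_scope.

Lemma sum_powerset_sign (A : {set T}) :
  \sum_(P in powerset A) (-1) ^+ #|P| = ((A == set0) : nat)%:Z :> int.
Proof.
have [->|[x xA]] := set_0Vmem A; first by rewrite powerset0 big_set1 cards0 eqxx.
have /negbTE-> : A != set0 by apply/set0Pn; exists x.
pose toggle (P : {set T}) := if x \in P then P :\ x else x |: P.
have toggleK : involutive toggle.
  move=> P; rewrite /toggle; case: (boolP (x \in P)) => xP.
    by rewrite setD11 setD1K.
  by rewrite setU11 setU1K.
have toggle_sub P : (toggle P \in powerset A) = (P \in powerset A).
  rewrite !powersetE /toggle; case: ifP => xP; last by rewrite subUset sub1set xA.
  by rewrite -{2}(setD1K xP) subUset sub1set xA.
have toggle_sign P : (-1) ^+ #|toggle P| = - (-1) ^+ #|P| :> int.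
  rewrite /toggle; case: ifP => xP; last by rewrite cardsU1 xP exprS mulN1r.
  by rewrite [in RHS](cardsD1 x P) xP exprS mulN1r opprK.
set S := \sum_(P in _) _; suff : S = - S.
  by move/eqP; rewrite -subr_eq0 opprK -mulr2n mulrn_eq0 => /eqP.
rewrite {1}/S (reindex_inj (inv_inj toggleK)) -sumrN.
by apply: eq_big => P; rewrite ?toggle_sub ?toggle_sign.
Qed.

Lemma sum_powerset_sign_subset (A R : {set T}) :
  \sum_(P in powerset A) (-1) ^+ #|P| * ((P \subset R) : nat)%:Z
    = ((A :&: R == set0) : nat)%:Z :> int.
Proof.
rewrite -sum_powerset_sign [RHS]big_mkcond [LHS]big_mkcond /=.
apply: eq_bigr => P _; rewrite !powersetE subsetI.
by case: (P \subset A); case: (P \subset R); rewrite ?mulr1 ?mulr0.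
Qed.

Lemma sum_powerset_sign_mem (x : T) (S R : {set T}) : x \notin S ->
  \sum_(P in powerset (x |: S) | x \in P)
      (-1) ^+ (#|P| - 1)%N * ((P \subset R) : nat)%:Z
    = (((x \in R) && (S :&: R == set0)) : nat)%:Z :> int.
Proof.
move=> xS; have [xR|xR] /= := boolP (x \in R); last first.
  rewrite big1 // => P /andP[_ xP].
  suff /negbTE-> : ~~ (P \subset R) by rewrite mulr0.
  by apply: contra xR => /subsetP sPR; apply: sPR.
have := sum_powerset_sign_subset (x |: S) R.
have /negbTE-> : (x |: S) :&: R != set0 by apply/set0Pn; exists x; rewrite !inE eqxx.
rewrite (bigID (fun P : {set T} => x \in P)) /= => /eqP; rewrite addr_eq0 => /eqP sum_mem.
transitivity (- \sum_(P in powerset (x |: S) | x \in P)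
                 (-1) ^+ #|P| * ((P \subset R) : nat)%:Z).
  rewrite -sumrN; apply: eq_bigr => P /andP[_ xP]; rewrite -mulNr.
  by rewrite (cardsD1 x P) xP add1n subn1 exprS mulN1r opprK.
rewrite sum_mem opprK -sum_powerset_sign_subset; apply: eq_bigl => P.
by rewrite !powersetE -{2}(setU1K xS) subsetD1.
Qed.

Lemma sum_at_most_one (F : pred T) :
  (forall x y, F x -> F y -> x = y) ->
  \sum_x (F x : nat)%:Z = ([exists x, F x] : nat)%:Z :> int.
Proof.
move=> F_uniq; have [/existsP[x Fx]|/existsPn noF] := boolP [exists x, F x].
  rewrite (bigD1 x) //= Fx big1 ?addr0 // => y ne_yx.
  by case: (boolP (F y)) => // /F_uniq/(_ Fx) eq_yx; rewrite eq_yx eqxx in ne_yx.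
by rewrite big1 // => x _; rewrite (negbTE (noF x)).
Qed.

End SignedSubsetSums.

Lemma injective_of_card_imset (T U : finType) (f : T -> U) :
  #|[set f x | x : T]| = #|T| -> injective f.
Proof.
move=> card_f x y; have /imset_injP inj : #|[set f x | x : T]| == #|T| by rewrite card_f.
exact: inj.
Qed.

Lemma injective_of_card_imset2 (T1 T2 U : finType) (f : T1 -> T2 -> U) :
  #|[set f x y | x : T1, y : T2]| = (#|T1| * #|T2|)%N ->
  injective (fun c : T1 * T2 => f c.1 c.2).
Proof.
move=> card_f; apply: injective_of_card_imset; rewrite card_prod -card_f.
suff -> : [set f c.1 c.2 | c : T1 * T2] = [set f x y | x : T1, y : T2] by [].
apply/setP => z; apply/imsetP/imset2P => [[c _ ->]|[x y _ _ ->]].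
  by exists c.1 c.2.
by exists (x, y).
Qed.

Section Labelings.
Variables (V : finType) (k : nat).
Local Notation labeling := {ffun V -> 'I_k}.
Implicit Types (phi : labeling) (e : rel V) (S : {set {perm V}}).

Definition fixers phi : {set {perm V}} := [set p | preserves p phi].

Lemma group_set_fixers phi : group_set (fixers phi).
Proof.
apply/group_setP; split=> [|p q]; rewrite !inE.
  by apply/forallP => v; rewrite perm1.
move=> /forallP fix_p /forallP fix_q; apply/forallP => v.
by rewrite permM (eqP (fix_q _)) (eqP (fix_p _)).
Qed.

Canonical fixers_group phi := group (group_set_fixers phi).

Lemma Aut1 e : 1%g \in Defs.Aut e.
Proof. by rewrite inE; apply/forallP => x; apply/forallP => y; rewrite !perm1. Qed.

Lemma in_stab e phi p : (p \in stab e phi) = (p \in Defs.Aut e) && (p \in fixers phi).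
Proof. by rewrite !inE. Qed.

Lemma distinguishing_disjoint e S phi :
  S \subset Defs.Aut e -> 1%g \notin S -> distinguishing e phi ->
  S :&: fixers phi = set0.
Proof.
move=> sSAut notS1 /eqP stab1; apply/setP => p; rewrite inE in_set0.
apply/andP => -[pS p_fix]; have : p \in stab e phi by rewrite in_stab (subsetP sSAut).
by rewrite stab1 inE => /eqP p1; rewrite -p1 pS in notS1.
Qed.

Local Open Scope ring_scope.

Lemma card_set_int (T : finType) (b : pred T) :
  #|[set x | b x]|%:Z = \sum_x (b x : nat)%:Z.
Proof.
rewrite -sum1_card (big_morph Posz PoszD (erefl _)) big_mkcond /=.
by apply: eq_bigr => x _; rewrite inE; case: (b x).
Qed.

Lemma Nge_sum S : (Nge k S)%:Z = \sum_(phi : labeling) ((S \subset fixers phi) : nat)%:Z.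
Proof.
rewrite /Nge card_set_int; apply: eq_bigr => phi _.
by congr (Posz (nat_of_bool _)); apply/forall_inP/subsetP => fixS p /fixS; rewrite inE.
Qed.

Lemma Ldist_sum e :
  (Ldist e k)%:Z = \sum_(phi : labeling) (distinguishing e phi : nat)%:Z.
Proof. by rewrite card_set_int. Qed.

Lemma Neq_sum e S : (Neq e k S)%:Z = \sum_(phi : labeling) ((stab e phi == S) : nat)%:Z.
Proof. by rewrite card_set_int. Qed.

Lemma sum_Nge_sign S :
  \sum_(P in powerset S) (-1) ^+ #|P| * (Nge k P)%:Z
    = \sum_(phi : labeling) ((S :&: fixers phi == set0) : nat)%:Z.
Proof.
under eq_bigr do rewrite Nge_sum mulr_sumr.
by rewrite exchange_big; apply: eq_bigr => phi _; rewrite sum_powerset_sign_subset.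
Qed.

Lemma sum_Nge_sign_mem x S : x \notin S ->
  \sum_(P in powerset (x |: S) | x \in P) (-1) ^+ (#|P| - 1)%N * (Nge k P)%:Z
    = \sum_(phi : labeling) (((x \in fixers phi) && (S :&: fixers phi == set0)) : nat)%:Z.
Proof.
move=> xS; under eq_bigr do rewrite Nge_sum mulr_sumr.
by rewrite exchange_big; apply: eq_bigr => phi _; rewrite sum_powerset_sign_mem.
Qed.

End Labelings.

Section CyclicFacts.
Variable gT : finGroupType.
Implicit Types x y r s : gT.
Local Open Scope group_scope.

Lemma orderX_cofactor x n : (n %| #[x])%N -> #[x ^+ (#[x] %/ n)] = n.
Proof. by move=> n_x; rewrite orderXdiv ?dvdn_div // divnA // mulKn. Qed.

(* Take for [p] a prime factor of [#[y]]: the cyclic group [<[x]>] has a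
   unique subgroup of order [p]. *)
Lemma cycle_prime_root x y : y \in <[x]> -> y != 1 ->
  exists2 p, p \in primes #[x] & x ^+ (#[x] %/ p) \in <[y]>.
Proof.
move=> xy y1; set p := pdiv #[y].
have p_pr : prime p by rewrite pdiv_prime // order_gt1.
have p_y : (p %| #[y])%N := pdiv_dvd _.
have p_x : (p %| #[x])%N := dvdn_trans p_y (order_dvdG xy).
exists p; first by rewrite mem_primes p_pr order_gt0.
have y_sub_x : <[y ^+ (#[y] %/ p)]> \subset <[x]>.
  by rewrite cycle_subG groupX.
have same_cycle : <[x ^+ (#[x] %/ p)]> = <[y ^+ (#[y] %/ p)]>.
  apply/eqP; rewrite (eq_subG_cyclic (cycle_cyclic x)) ?cycleX //.
  by rewrite -!orderE !orderX_cofactor.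
by apply: (subsetP (cycleX y (#[y] %/ p))); rewrite -same_cycle cycle_id.
Qed.

Lemma cycle_sqr_eq1 x y : y \in <[x]> -> y ^+ 2 = 1 ->
  y = 1 \/ ~~ odd #[x] /\ y = x ^+ (#[x] %/ 2).
Proof.
case/cyclePmin => i lt_i_x ->{y}; rewrite -expgM => /eqP; rewrite -order_dvdn.
have [->|i_gt0 /dvdnP[c def_c]] := posnP i; first by left; rewrite expg0.
have double_i : (i * 2 = #[x])%N.
  have : (0 < c < 2)%N.
    rewrite -[0 < c](ltn_pmul2r (order_gt0 x)) -[c < 2](ltn_pmul2r (order_gt0 x)).
    by rewrite -def_c mul0n muln_gt0 i_gt0 mulnC ltn_pmul2l.
  by case: c def_c => [|[|]] // ->; rewrite mul1n.
by right; rewrite -double_i oddM andbF mulnK.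
Qed.

Lemma order_of_injective t r s : (0 < t)%N -> r ^+ t = 1 ->
  injective (fun c : 'I_t * 'I_2 => r ^+ c.1 * s ^+ c.2) -> #[r] = t.
Proof.
move=> t_gt0 rt inj; apply/eqP; rewrite eqn_leq dvdn_leq ?order_dvdn ?rt //=.
rewrite leqNgt; apply/negP => lt_r_t.
have := inj (Ordinal lt_r_t, ord0) (Ordinal t_gt0, ord0).
rewrite /= expg_order !expg0 mulg1 => /(_ erefl) /(congr1 (fun ci => val ci.1)) /= r0.
by have := order_gt0 r; rewrite r0.
Qed.

Lemma notin_cycle_of_injective t r s : (0 < t)%N -> r ^+ t = 1 ->
  injective (fun c : 'I_t * 'I_2 => r ^+ c.1 * s ^+ c.2) -> s \notin <[r]>.
Proof.
move=> t_gt0 rt inj; apply/negP => /cyclePmin[i lt_i_r s_r].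
have lt_i_t : (i < t)%N by rewrite -(order_of_injective t_gt0 rt inj).
have := inj (Ordinal lt_i_t, ord0) (Ordinal t_gt0, Ordinal (isT : (1 < 2)%N)).
by rewrite /= !expg0 expg1 mulg1 mul1g s_r => /(_ erefl) [].
Qed.

End CyclicFacts.

Section Pstar.
Variables (V : finType) (t : nat) (r s : {perm V}).
Local Open Scope group_scope.

Lemma mem_Pstar_s : s \in Pstar t r s.
Proof. by rewrite /Pstar /P0star; case: odd; rewrite !inE eqxx. Qed.

Lemma mem_Pstar_half : ~~ odd t -> r ^+ (t %/ 2) * s \in Pstar t r s.
Proof. by rewrite /Pstar /P0star => /negbTE->; rewrite !inE eqxx orbT. Qed.

Lemma mem_Pstar_prime p : p \in primes t -> r ^+ (t %/ p) \in Pstar t r s.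
Proof. by move=> pt; rewrite /Pstar !inE (map_f _ pt) orbT. Qed.

Lemma Pstar_sub_rs : (0 < t)%N ->
  Pstar t r s \subset [set r ^+ i * s ^+ j | i : 'I_t, j : 'I_2].
Proof.
move=> t_gt0; have mem_rs i j : (i < t)%N -> (j < 2)%N ->
    r ^+ i * s ^+ j \in [set r ^+ i * s ^+ j | i : 'I_t, j : 'I_2].
  by move=> lt_i lt_j; apply/imset2P; exists (Ordinal lt_i) (Ordinal lt_j).
apply/subsetP => p; rewrite /Pstar /P0star !inE => /orP[|/mapP[q qt ->]].
  have s_rs : s \in [set r ^+ i * s ^+ j | i : 'I_t, j : 'I_2].
    by have := mem_rs 0 1%N t_gt0 isT; rewrite expg0 mul1g expg1.
  case: odd; rewrite !inE; first by move/eqP->.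
  case/orP=> /eqP-> //.
  by have := mem_rs (t %/ 2) 1%N (ltn_Pdiv (isT : (1 < 2)%N) t_gt0) isT; rewrite expg1.
have lt_tq_t : (t %/ q < t)%N.
  by rewrite ltn_Pdiv // prime_gt1 //; move: qt; rewrite mem_primes => /andP[].
by have := mem_rs _ 0 lt_tq_t isT; rewrite expg0 mulg1.
Qed.

Hypothesis r_order : #[r] = t.

Lemma one_notin_Pstar : s \notin <[r]> -> 1 \notin Pstar t r s.
Proof.
move=> s_r; have t_gt0 : (0 < t)%N by rewrite -r_order order_gt0.
have s1 : (1 == s) = false.
  by apply/negbTE; apply: contra s_r => /eqP <-; rewrite group1.
have half1 : (1 == r ^+ (t %/ 2) * s) = false.
  apply/negbTE; apply: contra s_r => /eqP half1.
  by rewrite -(mulKg (r ^+ (t %/ 2)) s) -half1 mulg1 groupV mem_cycle.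
rewrite /Pstar /P0star !inE; apply/negP => /orP[|/mapP[q]].
  by case: odd; rewrite !inE ?s1 ?half1.
rewrite mem_primes => /and3P[q_pr _ q_t] /eqP; rewrite eq_sym -order_dvdn r_order.
have tq_gt0 : (0 < t %/ q)%N by rewrite divn_gt0 ?prime_gt0 // dvdn_leq.
by move/(dvdn_leq tq_gt0); rewrite leqNgt ltn_Pdiv // prime_gt1.
Qed.

Hypotheses (s2 : s ^+ 2 = 1) (crs : commute r s).

Lemma Pstar_disjoint_trivial (H : {group {perm V}}) y j :
  Pstar t r s :&: H = set0 -> y \in <[r]> -> y * s ^+ j \in H -> y * s ^+ j = 1.
Proof.
move=> PH /cycleP[i ->{y}] rsH.
have notP p : p \in Pstar t r s -> p \in H -> False.
  by move=> pP pH; have := in_set0 p; rewrite -PH inE pP pH.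
have rot1 z : z \in <[r]> -> z \in H -> z = 1.
  move=> rz zH; apply/eqP/negPn/negP => z1.
  have [p pt rp_z] := cycle_prime_root rz z1; rewrite r_order in pt rp_z.
  by apply: notP (mem_Pstar_prime pt) _; rewrite (subsetP _ _ rp_z) ?cycle_subG.
move: rsH; rewrite -(expg_mod _ s2); case: (j %% 2)%N (ltn_pmod j (isT : (0 < 2)%N)).
  by rewrite mulg1 => _; apply: rot1; rewrite mem_cycle.
case=> // _ rsH; rewrite expg1 in rsH *; exfalso.
have sq : (r ^+ i * s) ^+ 2 = (r ^+ i) ^+ 2.
  by rewrite expgMn ?s2 ?mulg1 //; apply/commute_sym/commuteX/commute_sym.
have /(cycle_sqr_eq1 (mem_cycle r i)) : (r ^+ i) ^+ 2 = 1.
  by apply: rot1; [rewrite groupX ?mem_cycle | rewrite -sq groupX].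
rewrite r_order => -[ri1 | [t_even ri_half]].
  by apply: notP mem_Pstar_s _; rewrite ri1 mul1g in rsH.
by apply: notP (mem_Pstar_half t_even) _; rewrite -ri_half.
Qed.

End Pstar.

Lemma ZtZ2_distinguishingE (V : finType) (e : rel V) t (r s : {perm V}) k
    (phi : {ffun V -> 'I_k}) : (0 < t)%N -> ZtZ2_iso e t r s ->
  distinguishing e phi = (Pstar t r s :&: fixers phi == set0).
Proof.
move=> t_gt0 [rt s2 crs AutE cardAut].
have inj : injective (fun c : 'I_t * 'I_2 => (r ^+ c.1 * s ^+ c.2)%g).
  have := @injective_of_card_imset2 _ _ _
    (fun (i : 'I_t) (j : 'I_2) => r ^+ i * s ^+ j)%g.
  by rewrite -AutE cardAut !card_ord => /(_ erefl).
have r_order := order_of_injective t_gt0 rt inj.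
apply/idP/eqP => [dist | PH].
  apply: distinguishing_disjoint dist; first by rewrite AutE Pstar_sub_rs.
  exact: one_notin_Pstar (notin_cycle_of_injective t_gt0 rt inj).
apply/eqP/setP => p; rewrite in_stab AutE in_set1.
apply/andP/eqP => [[/imset2P[i j _ _ ->] fix_p] | ->]; last first.
  by rewrite -AutE Aut1 group1.
have fixed_trivial := Pstar_disjoint_trivial r_order s2 crs (H := fixers_group phi) PH.
exact: fixed_trivial (mem_cycle r i) fix_p.
Qed.

Section DtZ2.
Variables (V : finType) (e : rel V) (t : nat) (r u s : {perm V}).
Hypotheses (t_gt0 : (0 < t)%N) (iso : DtZ2_iso e t r u s).
Local Open Scope group_scope.

Implicit Types (b c : 'I_2) (i j : 'I_t).
Local Notation reflection b i := (u * r ^+ i * s ^+ b).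

Let rt : r ^+ t = 1. Proof. by case: iso => -[]. Qed.
Let u2 : u ^+ 2 = 1. Proof. by case: iso => -[]. Qed.
Let s2 : s ^+ 2 = 1. Proof. by case: iso => -[]. Qed.
Let uru : u * r * u = r^-1. Proof. by case: iso => -[]. Qed.
Let crs : commute r s. Proof. by case: iso => -[]. Qed.
Let cus : commute u s. Proof. by case: iso => _ []. Qed.
Let AutE : Defs.Aut e =
  [set u ^+ c.1 * (r ^+ c.2.1 * s ^+ c.2.2) | c : 'I_2 * ('I_t * 'I_2)].
Proof. by case: iso => _ [_ []]. Qed.

Let injD :
  injective (fun c : 'I_2 * ('I_t * 'I_2) => u ^+ c.1 * (r ^+ c.2.1 * s ^+ c.2.2)).
Proof.
case: iso => _ [_ [_ cardAut]]; apply: injective_of_card_imset.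
by rewrite -AutE cardAut !card_prod !card_ord mulnA.
Qed.

Let inj_rs : injective (fun c : 'I_t * 'I_2 => r ^+ c.1 * s ^+ c.2).
Proof.
move=> c d eq_cd; have := @injD (ord0, c) (ord0, d).
by rewrite /= !expg0 !mul1g => /(_ eq_cd) [].
Qed.

Let r_order : #[r] = t. Proof. exact: order_of_injective t_gt0 rt inj_rs. Qed.

Let notin1_Pstar : 1 \notin Pstar t r s.
Proof. exact: one_notin_Pstar r_order (notin_cycle_of_injective t_gt0 rt inj_rs). Qed.

Let one2 : 'I_2 := Ordinal (isT : (1 < 2)%N).

Let reflectionE b i : reflection b i = u ^+ one2 * (r ^+ i * s ^+ b).
Proof. by rewrite expg1 mulgA. Qed.

Lemma refl_in_Aut b i : reflection b i \in Defs.Aut e.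
Proof. by rewrite AutE reflectionE; apply/imsetP; exists (one2, (i, b)). Qed.

Lemma Pstar_sub_Aut : Pstar t r s \subset Defs.Aut e.
Proof.
apply/subsetP => p /(subsetP (Pstar_sub_rs r s t_gt0))/imset2P[i j _ _ ->].
by rewrite AutE; apply/imsetP; exists (ord0, (i, j)) => //=; rewrite expg0 mul1g.
Qed.

Lemma refl_notin_Pstar b i : reflection b i \notin Pstar t r s.
Proof.
apply/negP => /(subsetP (Pstar_sub_rs r s t_gt0))/imset2P[i' j' _ _].
rewrite reflectionE => eq_rs; have := @injD (one2, (i, b)) (ord0, (i', j')).
by rewrite /= expg0 mul1g => /(_ eq_rs)/(congr1 (fun ci => val ci.1)).
Qed.

Lemma refl_neq1 b i : reflection b i != 1.
Proof.
apply/eqP; rewrite reflectionE => eq_1.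
have := @injD (one2, (i, b)) (ord0, (Ordinal t_gt0, ord0)).
by rewrite /= !expg0 !mulg1 eq_1 => /(_ erefl)/(congr1 (fun ci => val ci.1)).
Qed.

Lemma refl_inj b i c j : reflection b i = reflection c j -> (b, i) = (c, j).
Proof.
rewrite !reflectionE => eq_refl.
by case: (@injD (one2, (i, b)) (one2, (j, c)) eq_refl) => -> ->.
Qed.

Lemma refl_mul b i c j :
  reflection b i * reflection c j = r ^- i * r ^+ j * s ^+ (b + c).
Proof.
have u_inv : u^-1 = u by apply/eqP; rewrite eq_invg_mul -expg2 u2.
have conj_u : (r ^+ i) ^ u = r ^- i by rewrite conjXg /conjg u_inv mulgA uru expgVn.
have csr : commute (s ^+ b) (u * r ^+ j).
  by apply: commuteM; apply: commute_sym; [apply: commuteX cus | apply: commuteX2 crs].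
rewrite -mulgA [s ^+ b * _]mulgA csr !mulgA -conj_u /conjg u_inv -!mulgA expgD.
by rewrite !mulgA.
Qed.

Lemma refl_sqr b i : reflection b i * reflection b i = 1.
Proof. by rewrite refl_mul mulVg mul1g addnn -mul2n expgM s2 expg1n. Qed.

Section Fixers.
Variables (k : nat) (phi : {ffun V -> 'I_k}).
Hypothesis PH : Pstar t r s :&: fixers phi = set0.

Let fixed_rotation_trivial y n :
  y \in <[r]> -> y * s ^+ n \in fixers phi -> y * s ^+ n = 1.
Proof. exact: (Pstar_disjoint_trivial r_order s2 crs (H := fixers_group phi) PH). Qed.

Lemma stab_cases p : p \in stab e phi -> p = 1 \/ exists b i, p = reflection b i.
Proof.
rewrite in_stab AutE => /andP[/imsetP[[c [i j]] _ ->] fix_p] /=.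
case: c fix_p => -[|[|//]] lt_c fix_p; [left | right].
  rewrite /= expg0 mul1g in fix_p *.
  exact: fixed_rotation_trivial (mem_cycle r i) fix_p.
by exists j, i; rewrite expg1 mulgA.
Qed.

Lemma refl_fixed_unique b i c j :
  reflection b i \in fixers phi -> reflection c j \in fixers phi ->
  reflection b i = reflection c j.
Proof.
move=> fix_bi fix_cj; apply: (mulgI (reflection b i)); rewrite refl_sqr refl_mul.
apply/esym/fixed_rotation_trivial; first by rewrite groupM ?groupV ?mem_cycle.
by rewrite -refl_mul groupM.
Qed.

Lemma distinguishing_reflections :
  distinguishing e phi = ~~ [exists c : 'I_2 * 'I_t, reflection c.1 c.2 \in fixers phi].
Proof.
apply/idP/existsPn => [/eqP stab1 [b i] | no_refl].
  apply/negP => fix_bi; have : reflection b i \in stab e phi.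
    by rewrite in_stab refl_in_Aut.
  by rewrite stab1 inE (negbTE (refl_neq1 b i)).
apply/eqP/setP => p; rewrite in_set1; apply/idP/eqP => [stab_p|->]; last first.
  by rewrite in_stab Aut1 group1.
have [//|[b [i def_p]]] := stab_cases stab_p.
have := no_refl (b, i); rewrite /= -def_p.
by move: stab_p; rewrite in_stab => /andP[_ ->].
Qed.

End Fixers.

Lemma stab_eq_pair k (phi : {ffun V -> 'I_k}) b i :
  (stab e phi == [set 1; reflection b i])
    = (reflection b i \in fixers phi) && (Pstar t r s :&: fixers phi == set0).
Proof.
apply/eqP/andP => [stab_pair | [fix_bi /eqP PH]].
  have fix_bi : reflection b i \in fixers phi.
    by have := set22 1 (reflection b i); rewrite -stab_pair in_stab => /andP[].
  split=> //; apply/eqP/setP => p; rewrite in_set0 in_setI.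
  apply/andP => -[pP fix_p]; have : p \in stab e phi.
    by rewrite in_stab (subsetP Pstar_sub_Aut).
  rewrite stab_pair !inE => /orP[]/eqP def_p.
    by have := notin1_Pstar; rewrite -def_p pP.
  by have := refl_notin_Pstar b i; rewrite -def_p pP.
apply/setP => p; rewrite in_set2; apply/idP/orP => [stab_p|[]/eqP->].
- have [->|[c [j def_p]]] := stab_cases PH stab_p; first by left.
  have fix_cj : reflection c j \in fixers phi.
    by move: stab_p; rewrite in_stab def_p => /andP[].
  by right; rewrite def_p (refl_fixed_unique PH fix_cj fix_bi).
- by rewrite in_stab Aut1 group1.
- by rewrite in_stab refl_in_Aut.
Qed.

Local Open Scope ring_scope.

Lemma Pstar_disjoint_cases k (phi : {ffun V -> 'I_k}) :
  ((Pstar t r s :&: fixers phi == set0) : nat)%:Z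
    = (distinguishing e phi : nat)%:Z
      + \sum_(b < 2) \sum_(i < t) ((stab e phi == [set 1%g; reflection b i]) : nat)%:Z.
Proof.
under eq_bigr do under eq_bigr do rewrite stab_eq_pair.
have [PH|notPH] := eqVneq (Pstar t r s :&: fixers phi) set0; last first.
  have /negbTE-> : ~~ distinguishing e phi.
    apply: contra notPH => dist; apply/eqP.
    exact: distinguishing_disjoint Pstar_sub_Aut notin1_Pstar dist.
  by rewrite add0r big1 // => b _; rewrite big1 // => i _; rewrite andbF.
rewrite (distinguishing_reflections PH) pair_big /=.
under eq_bigr do rewrite andbT.
rewrite sum_at_most_one; first by case: [exists _, _].
move=> [b i] [c j] /= fix_bi fix_cj.
exact/refl_inj/(refl_fixed_unique PH).
Qed.

End DtZ2.

Local Open Scope ring_scope.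

Theorem theorem4 (V : finType) (e : rel V) (t : nat) :
  symmetric e -> irreflexive e -> (0 < t)%N ->
  (forall (r s : {perm V}) (k : nat), (0 < k)%N -> ZtZ2_iso e t r s ->
     (Ldist e k)%:Z =
       \sum_(P in powerset (Pstar t r s)) (-1) ^+ #|P| * (Nge k P)%:Z)
  /\
  (forall (r u s : {perm V}) (k : nat), (0 < k)%N -> DtZ2_iso e t r u s ->
     (forall (b : 'I_2) (i : 'I_t),
        (Neq e k [set 1%g; (u * r ^+ i * s ^+ b)%g])%:Z =
          \sum_(P in powerset ((u * r ^+ i * s ^+ b)%g |: Pstar t r s)
                 | (u * r ^+ i * s ^+ b)%g \in P)
             (-1) ^+ (#|P| - 1)%N * (Nge k P)%:Z)
     /\
     (Ldist e k)%:Z =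
       \sum_(P in powerset (Pstar t r s)) (-1) ^+ #|P| * (Nge k P)%:Z
       - \sum_(b < 2) \sum_(i < t)
           (Neq e k [set 1%g; (u * r ^+ i * s ^+ b)%g])%:Z).
Proof.
move=> _ _ t_gt0; split=> [r s k _ iso | r u s k _ iso].
  rewrite Ldist_sum sum_Nge_sign; apply: eq_bigr => phi _.
  by rewrite (ZtZ2_distinguishingE _ t_gt0 iso).
split=> [b i | ].
  rewrite Neq_sum sum_Nge_sign_mem ?(refl_notin_Pstar t_gt0 iso) //.
  by apply: eq_bigr => phi _; rewrite (stab_eq_pair t_gt0 iso).
rewrite pair_big /=; under [X in _ - X]eq_bigr do rewrite Neq_sum.
rewrite exchange_big Ldist_sum sum_Nge_sign /=.
under [X in _ = X - _]eq_bigr do rewrite (Pstar_disjoint_cases t_gt0 iso) pair_big.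
by rewrite big_split addrK.
Qed.
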